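(* Let $\mathcal H$ be a real Hilbert space, $t_0>0$, let $f:\mathcal H\to\mathbb R$ be a convex function of class $\mathcal C^2(\mathcal H)$ with $S:=\operatorname{argmin}_{\mathcal H} f\neq\emptyset$, and let $e:[t_0,+\infty[\to\mathcal H$ be continuously differentiable. Suppose $\alpha\ge 0$ and $\beta>0$, and let $(x_0,\dot x_0)\in\mathcal H\times\mathcal H$. The following statements are equivalent: 1. $x:[t_0,+\infty[\to\mathcal H$ is a solution trajectory of $$\ddot x(t)+\frac{\alpha}{t}\dot x(t)+\beta\frac{d}{dt}\big(\nabla f(x(t))+e(t)\big)+\nabla f(x(t))+e(t)=0$$ with initial conditions $x(t_0)=x_0$, $\dot x(t_0)=\dot x_0$. 2. $(x,y):[t_0,+\infty[\to\mathcal H\times\mathcal H$ is a solution trajectory of the first-order system $$\begin{cases}\dot x(t)+\beta(\nabla f(x(t))+e(t))-\left(\frac1\beta-\frac\alpha t\right)x(t)+\frac1\beta y(t)=0,\\[2pt] \dot y(t)-\left(\frac1\beta-\frac\alpha t+\frac{\alpha\beta}{t^2}\right)x(t)+\frac1\beta y(t)=0,\end{cases}$$ with initial conditions $x(t_0)=x_0$ and $y(t_0)=-\beta(\dot x_0+\beta\nabla f(x_0))+(1-\beta\alpha/t_0)x_0-\beta^2e(t_0)$.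
   Context: Standing assumption of the paper: $f$ is convex on $\mathcal H$ and its set of minimizers $S$ is nonempty. *)

From HB Require Import structures.
From mathcomp Require Import all_boot all_order all_algebra.
From mathcomp Require Import all_classical all_reals all_analysis.
Set Implicit Arguments. Unset Strict Implicit. Unset Printing Implicit Defensive.
Import Order.TTheory GRing.Theory Num.Theory.
Import numFieldNormedType.Exports.
Local Open Scope ring_scope.

Section Defs.
Context {R : realType}.

(* A real Hilbert space: a complete normed space whose norm comes from the
   (symmetric, bilinear) inner product [inner]. *)
Definition is_inner_product (H : normedModType R) (inner : H -> H -> R) : Prop :=
  [/\ forall x y, inner x y = inner y x,
      forall a x y z, inner (a *: x + y) z = a * inner x z + inner y z &
      forall x, `|x| ^+ 2 = inner x x].

Definition is_gradient (H : normedModType R) (inner : H -> H -> R)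
  (f : H -> R) (g : H -> H) : Prop :=
  forall x, differentiable f x /\ forall h, 'd f x h = inner (g x) h.

Definition C1 (U V : normedModType R) (g : U -> V) : Prop :=
  (forall x, differentiable g x) /\
  forall x (eps : R), 0 < eps -> exists2 d : R, 0 < d &
    forall y, `|y - x| < d -> forall h, `|'d g y h - 'd g x h| <= eps * `|h|.

Definition C2 (H : normedModType R) (inner : H -> H -> R) (f : H -> R) : Prop :=
  exists g : H -> H, is_gradient inner f g /\ C1 g.

Definition convex_fun (H : normedModType R) (f : H -> R) : Prop :=
  forall x y (l : R), 0 <= l <= 1 ->
    f (l *: x + (1 - l) *: y) <= l * f x + (1 - l) * f y.

Definition hasderiv_on (V : normedModType R) (t0 : R) (u u' : R -> V) : Prop :=
  forall t, t0 <= t -> forall eps : R, 0 < eps -> exists2 d : R, 0 < d &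
    forall h : R, h != 0 -> `|h| < d -> t0 <= t + h ->
      `|h^-1 *: (u (t + h) - u t) - u' t| < eps.

Definition cont_on (V : normedModType R) (t0 : R) (u : R -> V) : Prop :=
  forall t, t0 <= t -> forall eps : R, 0 < eps -> exists2 d : R, 0 < d &
    forall s, t0 <= s -> `|s - t| < d -> `|u s - u t| < eps.

Definition C1_on (V : normedModType R) (t0 : R) (u : R -> V) : Prop :=
  exists u' : R -> V, hasderiv_on t0 u u' /\ cont_on t0 u'.

Definition sol_second_order (H : normedModType R) (gradf : H -> H)
  (e : R -> H) (alpha beta t0 : R) (x0 dx0 : H) (x : R -> H) : Prop :=
  exists (x' x'' w : R -> H),
    [/\ hasderiv_on t0 x x', hasderiv_on t0 x' x'',
        hasderiv_on t0 (fun t => gradf (x t) + e t) w,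
        (forall t, t0 <= t ->
           x'' t + (alpha / t) *: x' t + beta *: w t + (gradf (x t) + e t) = 0) &
        x t0 = x0 /\ x' t0 = dx0].

Definition sol_first_order (H : normedModType R) (gradf : H -> H)
  (e : R -> H) (alpha beta t0 : R) (x0 dx0 : H) (x y : R -> H) : Prop :=
  exists (x' y' : R -> H),
    [/\ hasderiv_on t0 x x', hasderiv_on t0 y y',
        (forall t, t0 <= t ->
           x' t + beta *: (gradf (x t) + e t) - (beta^-1 - alpha / t) *: x t
             + beta^-1 *: y t = 0),
        (forall t, t0 <= t ->
           y' t - (beta^-1 - alpha / t + alpha * beta / t ^+ 2) *: x t
             + beta^-1 *: y t = 0) &
        x t0 = x0 /\
        y t0 = - (beta *: (dx0 + beta *: gradf x0)) + (1 - beta * alpha / t0) *: x0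
               - beta ^+ 2 *: e t0].

End Defs.

(* With y := - beta (x' + beta (grad f (x) + e)) + (1 - beta alpha / t) x, the
   first equation of the system is this definition solved for x', and
   differentiating it turns the second equation into -beta times the
   second-order equation.  Conversely, the first equation shows that x' is
   differentiable, since grad f is C^1 and e is C^1, and the same computation
   runs backwards. *)

From HB Require Import structures.
From mathcomp Require Import all_boot all_order all_algebra.
From mathcomp Require Import all_classical all_reals all_analysis.
From mathcomp Require Import ring lra.
Set Implicit Arguments. Unset Strict Implicit. Unset Printing Implicit Defensive.
Import Order.TTheory GRing.Theory Num.Theory.
Import numFieldNormedType.Exports.
Local Open Scope ring_scope.

Section LinearTerms.
Variables (R : pzRingType) (V : lmodType R).

Inductive lterm :=
  | LVar of nat | LAdd of lterm & lterm | LOpp of lterm | LScale of R & lterm | LZero.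

Fixpoint leval (env : seq V) (t : lterm) : V :=
  match t with
  | LVar n => env`_n
  | LAdd a b => leval env a + leval env b
  | LOpp a => - leval env a
  | LScale k a => k *: leval env a
  | LZero => 0
  end.

Fixpoint lcoef (n : nat) (t : lterm) : R :=
  match t with
  | LVar m => if m == n then 1 else 0
  | LAdd a b => lcoef n a + lcoef n b
  | LOpp a => - lcoef n a
  | LScale k a => k * lcoef n a
  | LZero => 0
  end.

Lemma leval_sum env t : leval env t = \sum_(i < size env) lcoef i t *: env`_i.
Proof.
elim: t => [m | a IHa b IHb | a IHa | k a IHa | ] /=.
- have [lt_m|ge_m] := ltnP m (size env).
    rewrite (bigD1 (Ordinal lt_m)) //= eqxx scale1r big1 ?addr0 // => i.
    by rewrite -val_eqE /= eq_sym => /negbTE ->; rewrite scale0r.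
  rewrite nth_default // big1 // => i _.
  by rewrite gtn_eqF ?scale0r // (leq_trans (ltn_ord i)).
- by rewrite IHa IHb -big_split; apply: eq_bigr => i _; rewrite scalerDl.
- by rewrite IHa -sumrN; apply: eq_bigr => i _; rewrite scaleNr.
- by rewrite IHa scaler_sumr; apply: eq_bigr => i _; rewrite scalerA.
- by rewrite big1 // => i _; rewrite scale0r.
Qed.

Lemma leval_eq env t1 t2 :
  [seq lcoef i t1 | i <- iota 0 (size env)] = [seq lcoef i t2 | i <- iota 0 (size env)] ->
  leval env t1 = leval env t2.
Proof.
move=> Ecoef; rewrite !leval_sum; apply: eq_bigr => i _.
have := congr1 (nth 0 ^~ i) Ecoef.
by rewrite !(nth_map 0) ?size_iota // nth_iota // add0n => ->.
Qed.

End LinearTerms.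

Ltac lterm_index x env :=
  lazymatch env with
  | x :: _ => constr:(0%N)
  | _ :: ?env' => let n := lterm_index x env' in constr:(n.+1)
  end.

Ltac lterm_atoms t env :=
  lazymatch t with
  | (?a + ?b)%R => let env := lterm_atoms a env in lterm_atoms b env
  | (- ?a)%R => lterm_atoms a env
  | (_ *: ?a)%R => lterm_atoms a env
  | 0%R => env
  | _ => match tt with
         | _ => let _ := lterm_index t env in env
         | _ => constr:(t :: env)
         end
  end.

Ltac lterm_reify env t :=
  lazymatch t with
  | (?a + ?b)%R =>
      let a := lterm_reify env a in let b := lterm_reify env b in constr:(LAdd a b)
  | (- ?a)%R => let a := lterm_reify env a in constr:(LOpp a)
  | (?k *: ?a)%R => let a := lterm_reify env a in constr:(LScale k a)
  | 0%R => open_constr:(@LZero _)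
  | _ => let n := lterm_index t env in open_constr:(@LVar _ n)
  end.

Ltac split_seq_eq :=
  lazymatch goal with
  | |- (_ :: _ = _ :: _) => apply: (f_equal2 cons); last split_seq_eq
  | |- [::] = [::] => reflexivity
  end.

(* Reduces an identity between linear combinations in a module to one scalar
   identity per atom, an atom being any maximal subterm that is not a sum, an
   opposite, a scaling or 0. *)
Ltac lincomb :=
  cbv beta; lazymatch goal with |- @eq ?V ?l ?r =>
    let env := lterm_atoms l (@nil V) in
    let env := lterm_atoms r env in
    let tl := lterm_reify env l in
    let tr := lterm_reify env r in
    change (leval env tl = leval env tr); apply: leval_eq; rewrite /=;
    split_seq_eq
  end.


Section OneSidedDerivative.
Context {R : realType}.
Implicit Types (eps : R) (V W : normedModType R).

Definition taylor1_on V (t0 : R) (u u' : R -> V) :=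
  forall t, t0 <= t -> forall eps, 0 < eps -> exists2 d : R, 0 < d &
    forall h, `|h| < d -> t0 <= t + h -> `|u (t + h) - u t - h *: u' t| <= eps * `|h|.

Lemma hasderiv_onE V (t0 : R) (u u' : R -> V) : hasderiv_on t0 u u' <-> taylor1_on t0 u u'.
Proof.
have scale_quotient t h : h != 0 ->
    u (t + h) - u t - h *: u' t = h *: (h^-1 *: (u (t + h) - u t) - u' t).
  by move=> h0; rewrite scalerBr scalerA divff // scale1r.
split=> Du t t0t eps eps_gt0.
- have [d d_gt0 Dud] := Du t t0t eps eps_gt0; exists d => // h hd t0th.
  have [->|h0] := eqVneq h 0; first by rewrite addr0 subrr scale0r subr0 !normr0 mulr0.
  rewrite scale_quotient // normrZ mulrC ler_pM2r ?normr_gt0 //.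
  exact/ltW/Dud.
- have eps2_gt0 : 0 < eps / 2 by rewrite divr_gt0.
  have [d d_gt0 Dud] := Du t t0t _ eps2_gt0.
  exists d => // h h0 hd t0th.
  have := Dud h hd t0th; rewrite scale_quotient // normrZ mulrC ler_pM2r ?normr_gt0 //.
  by move/le_lt_trans; apply; rewrite gtr_pMr // invf_lt1 // ltr1n.
Qed.

Lemma hasderiv_on_eq V (t0 : R) (u v u' v' : R -> V) :
  (forall t, t0 <= t -> u t = v t) -> (forall t, t0 <= t -> u' t = v' t) ->
  hasderiv_on t0 u u' -> hasderiv_on t0 v v'.
Proof.
move=> Euv Eu' Du t t0t eps eps_gt0; have [d d_gt0 Dud] := Du t t0t eps eps_gt0.
exists d => // h h0 hd t0th.
by rewrite -Euv // -Euv // -Eu' //; apply: Dud.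
Qed.

Lemma hasderiv_on_cst V (t0 : R) (c : V) : hasderiv_on t0 (fun=> c) (fun=> 0).
Proof.
move=> t _ eps eps_gt0; exists 1 => // h _ _ _.
by rewrite subrr scaler0 subr0 normr0.
Qed.

Lemma taylor1_on_lipschitz V (t0 : R) (u u' : R -> V) t : taylor1_on t0 u u' -> t0 <= t ->
  exists2 d : R, 0 < d &
    forall h, `|h| < d -> t0 <= t + h -> `|u (t + h) - u t| <= (`|u' t| + 1) * `|h|.
Proof.
move=> Du t0t; have [d d_gt0 Dud] := Du t t0t 1 ltr01; exists d => // h hd t0th.
have tri : `|u (t + h) - u t| <= `|u (t + h) - u t - h *: u' t| + `|h *: u' t|.
  by rewrite -[X in `|X| <= _](subrK (h *: u' t)) ler_normD.
by move: tri (Dud h hd t0th); rewrite normrZ; lra.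
Qed.

Lemma hasderiv_onD V (t0 : R) (u v u' v' : R -> V) :
  hasderiv_on t0 u u' -> hasderiv_on t0 v v' ->
  hasderiv_on t0 (fun t => u t + v t) (fun t => u' t + v' t).
Proof.
move=> /hasderiv_onE Du /hasderiv_onE Dv; apply/hasderiv_onE => t t0t eps eps_gt0.
have eps2_gt0 : 0 < eps / 2 by rewrite divr_gt0.
have [d1 d1_gt0 Dud] := Du t t0t _ eps2_gt0; have [d2 d2_gt0 Dvd] := Dv t t0t _ eps2_gt0.
exists (Num.min d1 d2) => [|h]; first by rewrite lt_min d1_gt0.
rewrite lt_min => /andP[hd1 hd2] t0th.
have -> : u (t + h) + v (t + h) - (u t + v t) - h *: (u' t + v' t) =
    (u (t + h) - u t - h *: u' t) + (v (t + h) - v t - h *: v' t) by lincomb; ring.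
apply: (le_trans (ler_normD _ _)).
by have := Dud h hd1 t0th; have := Dvd h hd2 t0th; lra.
Qed.

Lemma hasderiv_onM V (t0 : R) (p p' : R -> R) (u u' : R -> V) :
  hasderiv_on t0 p p' -> hasderiv_on t0 u u' ->
  hasderiv_on t0 (fun t => p t *: u t) (fun t => p' t *: u t + p t *: u' t).
Proof.
move=> /hasderiv_onE Dp /hasderiv_onE Du; apply/hasderiv_onE => t t0t eps eps_gt0.
have eps3_gt0 : 0 < eps / 3 by rewrite divr_gt0.
pose Lp := `|p' t| + 1; pose Lu := `|u' t| + 1.
have Lp_gt0 : 0 < Lp by rewrite ltr_wpDl.
have Lu_gt0 : 0 < Lu by rewrite ltr_wpDl.
have small_prod a : 0 <= a -> a * (eps / 3 / (a + 1)) <= eps / 3.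
  by move=> a_ge0; rewrite mulrA ler_pdivrMr ?ltr_wpDl //; lra.
have [dp dp_gt0 Dpd] := Dp t t0t _ (divr_gt0 eps3_gt0 (ltr_wpDl (normr_ge0 (u t)) ltr01)).
have [du du_gt0 Dud] := Du t t0t _ (divr_gt0 eps3_gt0 (ltr_wpDl (normr_ge0 (p t)) ltr01)).
have [lp lp_gt0 Lipp] := taylor1_on_lipschitz Dp t0t.
have [lu lu_gt0 Lipu] := taylor1_on_lipschitz Du t0t.
exists (Num.min (Num.min dp du) (Num.min (Num.min lp lu) (eps / 3 / (Lp * Lu)))) => [|h].
  by rewrite !lt_min dp_gt0 du_gt0 lp_gt0 lu_gt0 !divr_gt0 ?mulr_gt0.
rewrite !lt_min => /andP[/andP[hdp hdu] /andP[/andP[hlp hlu] hLL]] t0th.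
have -> : p (t + h) *: u (t + h) - p t *: u t - h *: (p' t *: u t + p t *: u' t) =
    (p (t + h) - p t - h *: p' t) *: u t + p t *: (u (t + h) - u t - h *: u' t)
    + (p (t + h) - p t) *: (u (t + h) - u t).
  by lincomb; rewrite /GRing.scale /=; ring.
have remp : `|(p (t + h) - p t - h *: p' t) *: u t| <= eps / 3 * `|h|.
  rewrite normrZ mulrC; apply: (le_trans (ler_wpM2l (normr_ge0 _) (Dpd h hdp t0th))).
  by rewrite mulrA; apply: ler_wpM2r => //; apply: small_prod.
have remu : `|p t *: (u (t + h) - u t - h *: u' t)| <= eps / 3 * `|h|.
  rewrite normrZ; apply: (le_trans (ler_wpM2l (normr_ge0 _) (Dud h hdu t0th))).
  by rewrite mulrA; apply: ler_wpM2r => //; apply: small_prod.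
have cross : `|(p (t + h) - p t) *: (u (t + h) - u t)| <= eps / 3 * `|h|.
  have hLL' : Lp * Lu * `|h| <= eps / 3 by rewrite mulrC -ler_pdivlMr ?mulr_gt0 // ltW.
  rewrite normrZ; apply: (le_trans (ler_pM _ _ (Lipp h hlp t0th) (Lipu h hlu t0th))) => //.
  by rewrite mulrACA mulrA; apply: ler_wpM2r.
apply: (le_trans (ler_normD _ _)); apply: (le_trans (lerD (ler_normD _ _) (lexx _))).
lra.
Qed.

Lemma hasderiv_onZ V (t0 : R) (c : R) (u u' : R -> V) :
  hasderiv_on t0 u u' -> hasderiv_on t0 (fun t => c *: u t) (fun t => c *: u' t).
Proof.
move=> Du; have := hasderiv_onM (hasderiv_on_cst (t0 := t0) c) Du.
by apply: hasderiv_on_eq => // t _; rewrite scale0r add0r.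
Qed.

Lemma hasderiv_onV (t0 : R) : 0 < t0 ->
  hasderiv_on t0 (fun t : R => t^-1) (fun t => - (t ^+ 2)^-1).
Proof.
move=> t0_gt0; apply/hasderiv_onE => t t0t eps eps_gt0.
have t_gt0 : 0 < t := lt_le_trans t0_gt0 t0t.
exists (eps * t0 ^+ 3) => [|h hd t0th]; first by rewrite mulr_gt0 ?exprn_gt0.
have th_gt0 : 0 < t + h := lt_le_trans t0_gt0 t0th.
have den_gt0 : 0 < t ^+ 2 * (t + h) by rewrite mulr_gt0 ?exprn_gt0.
have -> : (t + h)^-1 - t^-1 - h *: - (t ^+ 2)^-1 = h ^+ 2 / (t ^+ 2 * (t + h)).
  by rewrite /GRing.scale /=; field; rewrite !gt_eqF.
rewrite normrM normfV normrX (gtr0_norm den_gt0) ler_pdivrMr //.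
have t03 : t0 ^+ 3 <= t ^+ 2 * (t + h).
  have t02 : t0 ^+ 2 <= t ^+ 2 by rewrite ler_sqr ?nnegrE; lra.
  by rewrite exprSr; apply: ler_pM => //; [exact: exprn_ge0 (ltW t0_gt0) | exact: ltW].
have h2 : `|h| ^+ 2 <= eps * `|h| * t0 ^+ 3.
  by rewrite expr2 mulrAC; apply: ler_wpM2r => //; exact: ltW.
by apply: (le_trans h2); apply: ler_wpM2l t03; rewrite mulr_ge0 // ltW.
Qed.

Lemma differentiable_remainder_le V W (g : V -> W) p : differentiable g p ->
  forall eps, 0 < eps -> exists2 d : R, 0 < d &
    forall k, `|k| < d -> `|g (k + p) - g p - 'd g p k| <= eps * `|k|.
Proof.
move=> dg eps eps_gt0.
have : forall e : R, 0 < e -> \forall k \near (0 : V),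
    `|((fun k => g (k + p)) - (fun k => g p + 'd g p k)) k| <= e * `|k|.
  by apply: eqadd_some_oP; apply/funext => k; exact: diff_locallyx dg k.
move=> /(_ eps eps_gt0) /nbhs_norm0P [d d_gt0 gd]; exists d => // k kd.
by move: (gd k kd) => /=; rewrite opprD addrA.
Qed.

Lemma hasderiv_on_comp V W (t0 : R) (g : V -> W) (u u' : R -> V) :
  (forall t, t0 <= t -> differentiable g (u t)) -> hasderiv_on t0 u u' ->
  hasderiv_on t0 (fun t => g (u t)) (fun t => 'd g (u t) (u' t)).
Proof.
move=> dg /hasderiv_onE Du; apply/hasderiv_onE => t t0t eps eps_gt0.
have eps2_gt0 : 0 < eps / 2 by rewrite divr_gt0.
pose L := `|u' t| + 1.
have L_gt0 : 0 < L by rewrite ltr_wpDl.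
have [M M_gt0 dgM] := linear_lipschitz (diff_continuous (dg t t0t)).
have [r r_gt0 remg] := differentiable_remainder_le (dg t t0t) (divr_gt0 eps2_gt0 L_gt0).
have [l l_gt0 Lipu] := taylor1_on_lipschitz Du t0t.
have [du du_gt0 remu] := Du t t0t _ (divr_gt0 eps2_gt0 M_gt0).
exists (Num.min (Num.min l du) (r / L)) => [|h].
  by rewrite !lt_min l_gt0 du_gt0 divr_gt0.
rewrite !lt_min => /andP[/andP[hl hdu] hr] t0th.
pose k := u (t + h) - u t.
have k_le : `|k| <= L * `|h| := Lipu h hl t0th.
have k_lt : `|k| < r by apply: (le_lt_trans k_le); rewrite mulrC -ltr_pdivlMr.
have -> : g (u (t + h)) - g (u t) - h *: 'd g (u t) (u' t) =
    (g (k + u t) - g (u t) - 'd g (u t) k) + ('d g (u t) k - h *: 'd g (u t) (u' t)).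
  by rewrite /k subrK; lincomb; ring.
rewrite -linearZ -linearB.
have rem_le : `|g (k + u t) - g (u t) - 'd g (u t) k| <= eps / 2 * `|h|.
  apply: (le_trans (remg k k_lt)); apply: (le_trans (ler_wpM2l _ k_le)).
    by rewrite ltW // divr_gt0.
  by rewrite mulrA divfK // gt_eqF.
have lin_le : `|'d g (u t) (k - h *: u' t)| <= eps / 2 * `|h|.
  apply: (le_trans (dgM _)); apply: (le_trans (ler_wpM2l (ltW M_gt0) (remu h hdu t0th))).
  by rewrite mulrA [M * _]mulrC divfK // gt_eqF.
by apply: (le_trans (ler_normD _ _)); lra.
Qed.

End OneSidedDerivative.

Lemma gradient_unique {R : realType} (V : normedModType R) (inner : V -> V -> R)
    (f : V -> R) (g1 g2 : V -> V) :
  is_inner_product inner -> is_gradient inner f g1 -> is_gradient inner f g2 -> g1 = g2.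
Proof.
move=> [_ inner_linear inner_norm] grad1 grad2; apply/funext => p.
have same_inner h : inner (g1 p) h = inner (g2 p) h.
  by rewrite -(proj2 (grad1 p)) (proj2 (grad2 p)).
apply/eqP; rewrite -subr_eq0 -normr_eq0 -sqrf_eq0 inner_norm.
by rewrite -scaleN1r addrC inner_linear same_inner mulN1r addNr.
Qed.

Section ChangeOfVariables.
Context {R : realType} {H : normedModType R}.
Variables (gradf : H -> H) (e : R -> H) (alpha beta t0 : R) (x0 dx0 : H).
Hypotheses (t0_gt0 : 0 < t0) (beta_gt0 : 0 < beta).

Let t_gt0 t : t0 <= t -> 0 < t := lt_le_trans t0_gt0.

Lemma sol_second_order_first_order x :
  sol_second_order gradf e alpha beta t0 x0 dx0 x ->
  exists y, sol_first_order gradf e alpha beta t0 x0 dx0 x y.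
Proof.
case=> x' [x'' [w [Dx Dx' Dw eqn [x_t0 x'_t0]]]].
pose y t := - beta *: x' t - beta ^+ 2 *: (gradf (x t) + e t) + (1 - beta * alpha / t) *: x t.
pose y' t := - beta *: x'' t - beta ^+ 2 *: w t + (beta * alpha / t ^+ 2) *: x t
  + (1 - beta * alpha / t) *: x' t.
have Dy : hasderiv_on t0 y y'.
  have Dx_over_t := hasderiv_onM (hasderiv_onV t0_gt0) Dx.
  apply: (hasderiv_on_eq _ _ (hasderiv_onD
    (hasderiv_onD (hasderiv_onZ (- beta) Dx') (hasderiv_onZ (- beta ^+ 2) Dw))
    (hasderiv_onD Dx (hasderiv_onZ (- (beta * alpha)) Dx_over_t)))) => t /t_gt0 t_pos.
    by rewrite /y; lincomb; field; rewrite !gt_eqF.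
  by rewrite /y'; lincomb; field; rewrite !gt_eqF.
exists y, x', y'; split => // [t /t_gt0 t_pos | t t0t |].
- by rewrite /y; lincomb; field; rewrite !gt_eqF.
- transitivity (- beta *: (x'' t + (alpha / t) *: x' t + beta *: w t + (gradf (x t) + e t)));
    last by rewrite eqn // scaler0.
  by have t_pos := t_gt0 t0t; rewrite /y /y'; lincomb; field; rewrite !gt_eqF.
- by split=> //; rewrite /y x_t0 x'_t0; lincomb; field; rewrite !gt_eqF.
Qed.

Lemma sol_first_order_second_order (e' : R -> H) x y :
  (forall p, differentiable gradf p) -> hasderiv_on t0 e e' ->
  sol_first_order gradf e alpha beta t0 x0 dx0 x y ->
  sol_second_order gradf e alpha beta t0 x0 dx0 x.
Proof.
move=> dgradf De [x' [y' [Dx Dy eqx eqy [x_t0 y_t0]]]].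
pose w t := 'd gradf (x t) (x' t) + e' t.
have Dw : hasderiv_on t0 (fun t => gradf (x t) + e t) w.
  exact: hasderiv_onD (hasderiv_on_comp (fun t _ => dgradf (x t)) Dx) De.
pose x'' t := - beta *: w t + beta^-1 *: x' t + (alpha / t ^+ 2) *: x t
  - (alpha / t) *: x' t - beta^-1 *: y' t.
have Dx' : hasderiv_on t0 x' x''.
  have Dx_over_t := hasderiv_onM (hasderiv_onV t0_gt0) Dx.
  apply: (hasderiv_on_eq _ _ (hasderiv_onD (hasderiv_onD (hasderiv_onD
    (hasderiv_onZ (- beta) Dw) (hasderiv_onZ beta^-1 Dx))
    (hasderiv_onZ (- alpha) Dx_over_t)) (hasderiv_onZ (- beta^-1) Dy))) => t t0t.
    have t_pos := t_gt0 t0t.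
    symmetry; apply/eqP; rewrite -subr_eq0 -[X in _ == X](eqx t t0t); apply/eqP.
    by lincomb; field; rewrite !gt_eqF.
  by have t_pos := t_gt0 t0t; rewrite /x''; lincomb; field; rewrite !gt_eqF.
exists x', x'', w; split => // [t t0t |].
- have t_pos := t_gt0 t0t.
  transitivity (beta^-1 *: (x' t + beta *: (gradf (x t) + e t) - (beta^-1 - alpha / t) *: x t
      + beta^-1 *: y t)
    - beta^-1 *: (y' t - (beta^-1 - alpha / t + alpha * beta / t ^+ 2) *: x t
      + beta^-1 *: y t)); last by rewrite eqx // eqy // !scaler0 subrr.
  by rewrite /x''; lincomb; field; rewrite !gt_eqF.
- split => //; apply/eqP; rewrite -subr_eq0 -[X in _ == X](eqx t0 (lexx t0)) x_t0 y_t0.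
  by apply/eqP; lincomb; field; rewrite !gt_eqF.
Qed.

End ChangeOfVariables.

Theorem theorem1 (R : realType) (H : completeNormedModType R)
  (inner : H -> H -> R) (t0 : R) (f : H -> R) (gradf : H -> H) (e : R -> H)
  (alpha beta : R) (x0 dx0 : H) :
  is_inner_product inner ->
  0 < t0 ->
  convex_fun f ->
  C2 inner f ->
  is_gradient inner f gradf ->
  (exists z : H, forall u : H, f z <= f u) ->
  C1_on t0 e ->
  0 <= alpha -> 0 < beta ->
  forall x : R -> H,
    sol_second_order gradf e alpha beta t0 x0 dx0 x <->
    exists y : R -> H, sol_first_order gradf e alpha beta t0 x0 dx0 x y.
Proof.
move=> inner_ip t0_gt0 _ [g [grad_g [dg _]]] grad_f _ [e' [De _]] _ beta_gt0 x.
have g_gradf : g = gradf := gradient_unique inner_ip grad_g grad_f.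
split; first exact: sol_second_order_first_order.
case=> y; apply: (sol_first_order_second_order t0_gt0 beta_gt0 _ De).
by rewrite -g_gradf.
Qed.
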